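(* Let $A$ be an algebra over a field $\Bbbk$. The $A$-bimodule $A$ (with structure map ${}_Am_A=m\circ(m\otimes 1):A\otimes A\otimes A\to A$) is projective in the category ${}_A\mathcal{M}_A$ of $A$-bimodules if and only if $A$ admits a normalized nearly Frobenius coproduct.
   Context: Algebras are associative and unital; tensor products over $\Bbbk$; $m$ denotes multiplication. A nearly Frobenius coproduct on $A$ is a $\Bbbk$-linear map $\Delta:A\to A\otimes A$ with $\Delta\circ m=(1\otimes m)\circ(\Delta\otimes 1)=(m\otimes 1)\circ(1\otimes\Delta)$; it is normalized if $m\circ\Delta=\operatorname{Id}_A$. *)

From HB Require Import structures.
From mathcomp Require Import all_boot all_order all_algebra.
Set Implicit Arguments. Unset Strict Implicit. Unset Printing Implicit Defensive.
Import GRing.Theory.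
Local Open Scope ring_scope.

Definition klinear (k : fieldType) (U V : lmodType k) (f : U -> V) : Prop :=
  forall (c : k) (x y : U), f (c *: x + y) = c *: f x + f y.

Definition bilinear2 (k : fieldType) (U V W : lmodType k) (f : U -> V -> W) : Prop :=
  (forall v, klinear (fun u => f u v)) /\ (forall u, klinear (f u)).

Definition trilinear3 (k : fieldType) (U V X W : lmodType k)
  (f : U -> V -> X -> W) : Prop :=
  (forall v x, klinear (fun u => f u v x)) /\
  (forall u x, klinear (fun v => f u v x)) /\
  (forall u v, klinear (f u v)).

(* A tensor product U (x) V over k, given by its universal property:
   a bilinear map t : U -> V -> T such that every bilinear map out of U x V
   factors uniquely through a linear map T -> W. *)
Record tensor2 (k : fieldType) (U V : lmodType k) := Tensor2 {
  t2_space :> lmodType k;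
  t2 : U -> V -> t2_space;
  t2_bilinear : bilinear2 t2;
  t2_lift : forall W : lmodType k, (U -> V -> W) -> t2_space -> W;
  t2_lift_linear : forall (W : lmodType k) (f : U -> V -> W),
      bilinear2 f -> klinear (t2_lift f);
  t2_lift_t : forall (W : lmodType k) (f : U -> V -> W),
      bilinear2 f -> forall u v, t2_lift f (t2 u v) = f u v;
  t2_unique : forall (W : lmodType k) (g h : t2_space -> W),
      klinear g -> klinear h -> (forall u v, g (t2 u v) = h (t2 u v)) ->
      forall x, g x = h x
}.

Record tensor3 (k : fieldType) (U V X : lmodType k) := Tensor3 {
  t3_space :> lmodType k;
  t3 : U -> V -> X -> t3_space;
  t3_trilinear : trilinear3 t3;
  t3_lift : forall W : lmodType k, (U -> V -> X -> W) -> t3_space -> W;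
  t3_lift_linear : forall (W : lmodType k) (f : U -> V -> X -> W),
      trilinear3 f -> klinear (t3_lift f);
  t3_lift_t : forall (W : lmodType k) (f : U -> V -> X -> W),
      trilinear3 f -> forall u v x, t3_lift f (t3 u v x) = f u v x;
  t3_unique : forall (W : lmodType k) (g h : t3_space -> W),
      klinear g -> klinear h -> (forall u v x, g (t3 u v x) = h (t3 u v x)) ->
      forall y, g y = h y
}.

Section Frobenius.
Variables (k : fieldType) (A : algType k) (T2 : tensor2 A A) (T3 : tensor3 A A A).

Definition mult : T2 -> A := t2_lift (W := A) (fun a b : A => a * b).

Definition t3_r (x : T2) (b : A) : T3 := t2_lift (W := T3) (fun a a' => t3 T3 a a' b) x.
Definition t3_l (a : A) (x : T2) : T3 := t2_lift (W := T3) (fun a' b => t3 T3 a a' b) x.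

Definition comul_id (D : A -> T2) : T2 -> T3 :=
  t2_lift (W := T3) (fun a b => t3_r (D a) b).
Definition id_comul (D : A -> T2) : T2 -> T3 :=
  t2_lift (W := T3) (fun a b => t3_l a (D b)).

Definition id_mult : T3 -> T2 := t3_lift (W := T2) (fun a b c => t2 T2 a (b * c)).
Definition mult_id : T3 -> T2 := t3_lift (W := T2) (fun a b c => t2 T2 (a * b) c).

Definition nearly_frobenius (D : A -> T2) : Prop :=
  klinear D /\
  (forall x : T2, D (mult x) = id_mult (comul_id D x)) /\
  (forall x : T2, D (mult x) = mult_id (id_comul D x)).

Definition normalized (D : A -> T2) : Prop := forall a : A, mult (D a) = a.

End Frobenius.

Record bimodule (k : fieldType) (A : algType k) := Bimodule {
  bm_space :> lmodType k;
  bm_l : A -> bm_space -> bm_space;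
  bm_r : bm_space -> A -> bm_space;
  bm_l_bilinear : bilinear2 bm_l;
  bm_r_bilinear : bilinear2 bm_r;
  bm_l_assoc : forall a b x, bm_l (a * b) x = bm_l a (bm_l b x);
  bm_l_unit : forall x, bm_l 1 x = x;
  bm_r_assoc : forall x a b, bm_r x (a * b) = bm_r (bm_r x a) b;
  bm_r_unit : forall x, bm_r x 1 = x;
  bm_lr : forall a x b, bm_l a (bm_r x b) = bm_r (bm_l a x) b
}.

Definition bimod_morph (k : fieldType) (A : algType k) (M N : bimodule A)
  (f : M -> N) : Prop :=
  klinear f /\ (forall a x, f (bm_l a x) = bm_l a (f x)) /\
  (forall x a, f (bm_r x a) = bm_r (f x) a).

Definition bimod_projective (k : fieldType) (A : algType k) (P : bimodule A) : Prop :=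
  forall (M N : bimodule A) (f : M -> N) (g : P -> N),
    bimod_morph f -> (forall y : N, exists x : M, f x = y) -> bimod_morph g ->
    exists h : P -> M, bimod_morph h /\ forall p, f (h p) = g p.

Section Regular.
Variables (k : fieldType) (A : algType k).

Lemma reg_l_bilinear : bilinear2 (fun a x : A => a * x).
Proof.
split=> [v c x y|u c x y] /=; first by rewrite mulrDl scalerAl.
by rewrite mulrDr scalerAr.
Qed.

Lemma reg_r_bilinear : bilinear2 (fun x a : A => x * a).
Proof.
split=> [v c x y|u c x y] /=; first by rewrite mulrDl scalerAl.
by rewrite mulrDr scalerAr.
Qed.

Definition regular_bimodule : bimodule A :=
  @Bimodule k A A (fun a x => a * x) (fun x a => x * a)
    reg_l_bilinear reg_r_bilinear
    (fun a b x => esym (mulrA a b x)) (@mul1r A)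
    (fun x a b => mulrA x a b) (@mulr1 A) (fun a x b => mulrA a x b).

End Regular.

From mathcomp Require Import all_boot all_order all_algebra.

(* The multiplication m : A (x) A -> A is a surjective morphism of A-bimodules,
   and a linear map D : A -> A (x) A is a nearly Frobenius coproduct exactly
   when it is a bimodule morphism; it is normalized exactly when it splits m.
   If A is projective, lifting the identity of A along m gives such a
   splitting.  Conversely a splitting makes A a retract of A (x) A, which is
   projective because it is free on 1 (x) 1: a bimodule morphism out of it is
   determined by the image x of 1 (x) 1, as u (x) v |-> u . x . v. *)

Set Implicit Arguments. Unset Strict Implicit. Unset Printing Implicit Defensive.
Import GRing.Theory.
Local Open Scope ring_scope.

Section KLinear.
Variable k : fieldType.

Lemma klinear_idfun (U : lmodType k) : klinear (fun x : U => x).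
Proof. by []. Qed.

Lemma klinear_comp (U V W : lmodType k) (f : V -> W) (g : U -> V) :
  klinear f -> klinear g -> klinear (fun x => f (g x)).
Proof. by move=> Hf Hg c x y; rewrite Hg Hf. Qed.

Lemma klinear_lincomb (U V : lmodType k) (f g : U -> V) (c : k) :
  klinear f -> klinear g -> klinear (fun x => c *: f x + g x).
Proof.
move=> Hf Hg d x y; rewrite Hf Hg scalerDr !scalerA mulrC -scalerA.
by rewrite addrACA scalerDr.
Qed.

Variables (U V : lmodType k) (T : tensor2 U V).

Lemma klinear_t2_lift_param (P W : lmodType k) (F : P -> U -> V -> W) (x : T) :
  (forall p, bilinear2 (F p)) -> (forall u v, klinear (fun p => F p u v)) ->
  klinear (fun p => t2_lift (t := T) (F p) x).
Proof.
move=> FB FL c p p'; move: x; apply: t2_unique.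
- exact: t2_lift_linear.
- by apply: klinear_lincomb; apply: t2_lift_linear.
by move=> u v; rewrite !t2_lift_t ?FL.
Qed.

End KLinear.

Section Bimodules.
Variables (k : fieldType) (A : algType k).

Lemma bimod_morph_id (M : bimodule A) : bimod_morph (M := M) (N := M) id.
Proof. by []. Qed.

Lemma bimod_morph_comp (M N L : bimodule A) (f : N -> L) (g : M -> N) :
  bimod_morph f -> bimod_morph g -> bimod_morph (fun x => f (g x)).
Proof.
move=> [fL [fl fr]] [gL [gl gr]]; split; first exact: klinear_comp.
by split=> [a x|x a]; rewrite ?gl ?fl ?gr ?fr.
Qed.

Lemma bimod_projective_retract (P Q : bimodule A) (s : Q -> P) (r : P -> Q) :
  bimod_morph s -> bimod_morph r -> (forall q, r (s q) = q) ->
  bimod_projective P -> bimod_projective Q.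
Proof.
move=> sM rM rs projP M N f g fM f_surj gM.
have [h [hM fh]] := projP M N f _ fM f_surj (bimod_morph_comp gM rM).
exists (fun q => h (s q)); split; first exact: bimod_morph_comp.
by move=> q; rewrite fh rs.
Qed.

End Bimodules.

Section TensorBimodule.
Variables (k : fieldType) (A : algType k) (T2 : tensor2 A A).

Local Notation "u (x) v" := (t2 T2 u v) (at level 40, left associativity).

Lemma mult_t u v : mult (u (x) v) = u * v.
Proof. exact: (t2_lift_t T2 (reg_l_bilinear A)). Qed.

Lemma mult_linear : klinear (@mult _ _ T2).
Proof. exact: t2_lift_linear (reg_l_bilinear A). Qed.

Lemma mult_surj (a : A) : exists x : T2, mult x = a.
Proof. by exists (1 (x) a); rewrite mult_t mul1r. Qed.

Definition tensor_lmul (a : A) : T2 -> T2 := t2_lift (fun u v => (a * u) (x) v).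
Definition tensor_rmul (x : T2) (b : A) : T2 :=
  t2_lift (fun u v => u (x) (v * b)) x.

Lemma t2_mull_bilinear a : bilinear2 (fun u v : A => (a * u) (x) v).
Proof.
split=> [v|u] c x y /=; last exact: (t2_bilinear T2).2.
by rewrite mulrDr -scalerAr (t2_bilinear T2).1.
Qed.

Lemma t2_mulr_bilinear b : bilinear2 (fun u v : A => u (x) (v * b)).
Proof.
split=> [v|u] c x y /=; first exact: (t2_bilinear T2).1.
by rewrite mulrDl -scalerAl (t2_bilinear T2).2.
Qed.

Lemma tensor_lmul_t a u v : tensor_lmul a (u (x) v) = (a * u) (x) v.
Proof. exact: (t2_lift_t T2 (t2_mull_bilinear a)). Qed.

Lemma tensor_rmul_t u v b : tensor_rmul (u (x) v) b = u (x) (v * b).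
Proof. exact: (t2_lift_t T2 (t2_mulr_bilinear b)). Qed.

Lemma tensor_lmul_linear a : klinear (tensor_lmul a).
Proof. exact: t2_lift_linear (t2_mull_bilinear a). Qed.

Lemma tensor_rmul_linear b : klinear (tensor_rmul ^~ b).
Proof. exact: t2_lift_linear (t2_mulr_bilinear b). Qed.

Lemma tensor_lmul_bilinear : bilinear2 tensor_lmul.
Proof.
split=> [x|]; last exact: tensor_lmul_linear.
apply: klinear_t2_lift_param t2_mull_bilinear _ => u v c a a' /=.
by rewrite mulrDl -scalerAl (t2_bilinear T2).1.
Qed.

Lemma tensor_rmul_bilinear : bilinear2 tensor_rmul.
Proof.
split=> [b|x]; first exact: tensor_rmul_linear.
apply: klinear_t2_lift_param t2_mulr_bilinear _ => u v c b b' /=.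
by rewrite mulrDr -scalerAr (t2_bilinear T2).2.
Qed.

Lemma tensor_lmulA a b x :
  tensor_lmul (a * b) x = tensor_lmul a (tensor_lmul b x).
Proof.
move: x; apply: t2_unique => [||u v]; first exact: tensor_lmul_linear.
  exact: klinear_comp (tensor_lmul_linear a) (tensor_lmul_linear b).
by rewrite !tensor_lmul_t mulrA.
Qed.

Lemma tensor_lmul1 x : tensor_lmul 1 x = x.
Proof.
move: x; apply: t2_unique => [||u v]; first exact: tensor_lmul_linear.
  exact: klinear_idfun.
by rewrite tensor_lmul_t mul1r.
Qed.

Lemma tensor_rmulA x a b :
  tensor_rmul x (a * b) = tensor_rmul (tensor_rmul x a) b.
Proof.
move: x; apply: t2_unique => [||u v]; first exact: tensor_rmul_linear.
  exact: klinear_comp (tensor_rmul_linear b) (tensor_rmul_linear a).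
by rewrite !tensor_rmul_t mulrA.
Qed.

Lemma tensor_rmul1 x : tensor_rmul x 1 = x.
Proof.
move: x; apply: t2_unique => [||u v]; first exact: tensor_rmul_linear.
  exact: klinear_idfun.
by rewrite tensor_rmul_t mulr1.
Qed.

Lemma tensor_lmul_rmul a x b :
  tensor_lmul a (tensor_rmul x b) = tensor_rmul (tensor_lmul a x) b.
Proof.
move: x; apply: t2_unique => [||u v].
- exact: klinear_comp (tensor_lmul_linear a) (tensor_rmul_linear b).
- exact: klinear_comp (tensor_rmul_linear b) (tensor_lmul_linear a).
by rewrite tensor_rmul_t !tensor_lmul_t tensor_rmul_t.
Qed.

Definition tensor_bimodule : bimodule A :=
  Bimodule tensor_lmul_bilinear tensor_rmul_bilinear
    tensor_lmulA tensor_lmul1 tensor_rmulA tensor_rmul1 tensor_lmul_rmul.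

Lemma mult_bimod_morph :
  bimod_morph (M := tensor_bimodule) (N := regular_bimodule A) (@mult _ _ T2).
Proof.
split; first exact: mult_linear.
split=> [a x|x b] /=; move: x; apply: t2_unique => [||u v].
- exact: klinear_comp mult_linear (tensor_lmul_linear a).
- exact: klinear_comp ((reg_l_bilinear A).2 a) mult_linear.
- by rewrite tensor_lmul_t !mult_t mulrA.
- exact: klinear_comp mult_linear (tensor_rmul_linear b).
- exact: klinear_comp ((reg_r_bilinear A).1 b) mult_linear.
by rewrite tensor_rmul_t !mult_t mulrA.
Qed.

Section TensorAction.
Variable M : bimodule A.

Lemma bimod_act_bilinear (x : M) : bilinear2 (fun u v : A => bm_r (bm_l u x) v).
Proof.
split=> [v c a a'|u]; last exact: (bm_r_bilinear M).2.
by rewrite (bm_l_bilinear M).1 (bm_r_bilinear M).1.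
Qed.

Definition tensor_act (x : M) : T2 -> M :=
  t2_lift (fun u v => bm_r (bm_l u x) v).

Lemma tensor_act_t x u v : tensor_act x (u (x) v) = bm_r (bm_l u x) v.
Proof. exact: (t2_lift_t T2 (bimod_act_bilinear x)). Qed.

Lemma tensor_act_linear x : klinear (tensor_act x).
Proof. exact: t2_lift_linear (bimod_act_bilinear x). Qed.

Lemma tensor_act_bimod_morph x :
  bimod_morph (M := tensor_bimodule) (N := M) (tensor_act x).
Proof.
split; first exact: tensor_act_linear.
split=> [a y|y b] /=; move: y; apply: t2_unique => [||u v].
- exact: klinear_comp (tensor_act_linear x) (tensor_lmul_linear a).
- exact: klinear_comp ((bm_l_bilinear M).2 a) (tensor_act_linear x).
- by rewrite tensor_lmul_t !tensor_act_t bm_l_assoc bm_lr.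
- exact: klinear_comp (tensor_act_linear x) (tensor_rmul_linear b).
- exact: klinear_comp ((bm_r_bilinear M).1 b) (tensor_act_linear x).
by rewrite tensor_rmul_t !tensor_act_t bm_r_assoc.
Qed.

Lemma tensor_actE (g : tensor_bimodule -> M) :
  bimod_morph g -> forall y, g y = tensor_act (g (1 (x) 1)) y.
Proof.
move=> [gL [gl gr]]; apply: t2_unique => [||u v] //.
  exact: tensor_act_linear.
rewrite tensor_act_t -gl -gr /= tensor_lmul_t tensor_rmul_t.
by rewrite mulr1 mul1r.
Qed.

End TensorAction.

Lemma tensor_act_comp (M N : bimodule A) (f : M -> N) (x : M) :
  bimod_morph f -> forall y, f (tensor_act x y) = tensor_act (f x) y.
Proof.
move=> fM y; have fxM := bimod_morph_comp fM (tensor_act_bimod_morph x).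
by rewrite (tensor_actE fxM) tensor_act_t bm_l_unit bm_r_unit.
Qed.

Lemma tensor_bimodule_projective : bimod_projective tensor_bimodule.
Proof.
move=> M N f g fM f_surj gM.
have [x fx] := f_surj (g (1 (x) 1)).
exists (tensor_act x); split; first exact: tensor_act_bimod_morph.
by move=> y; rewrite tensor_act_comp // fx -tensor_actE.
Qed.

End TensorBimodule.

Section Comultiplication.
Variables (k : fieldType) (A : algType k).
Variables (T2 : tensor2 A A) (T3 : tensor3 A A A).

Local Notation "u (x) v" := (t2 T2 u v) (at level 40, left associativity).

Lemma t3_bilinear12 b : bilinear2 (fun a a' : A => t3 T3 a a' b).
Proof.
split=> [a'|a]; first exact: (t3_trilinear T3).1.
exact: (t3_trilinear T3).2.1.
Qed.

Lemma t3_bilinear23 a : bilinear2 (fun a' b : A => t3 T3 a a' b).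
Proof.
split=> [b|a']; first exact: (t3_trilinear T3).2.1.
exact: (t3_trilinear T3).2.2.
Qed.

Lemma t3_r_t u v b : t3_r T3 (u (x) v) b = t3 T3 u v b.
Proof. exact: (t2_lift_t T2 (t3_bilinear12 b)). Qed.

Lemma t3_l_t a u v : t3_l T3 a (u (x) v) = t3 T3 a u v.
Proof. exact: (t2_lift_t T2 (t3_bilinear23 a)). Qed.

Lemma t3_r_bilinear : bilinear2 (t3_r T3 (T2 := T2)).
Proof.
split=> [b|x]; first exact: t2_lift_linear (t3_bilinear12 b).
apply: klinear_t2_lift_param t3_bilinear12 _ => u v.
exact: (t3_trilinear T3).2.2.
Qed.

Lemma t3_l_bilinear : bilinear2 (t3_l T3 (T2 := T2)).
Proof.
split=> [x|a]; last exact: t2_lift_linear (t3_bilinear23 a).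
apply: klinear_t2_lift_param t3_bilinear23 _ => u v.
exact: (t3_trilinear T3).1.
Qed.

Lemma id_mult_trilinear : trilinear3 (fun a b c : A => a (x) (b * c)).
Proof.
split; [|split] => [b c|a c|a b] d x y /=; first exact: (t2_bilinear T2).1.
  by rewrite mulrDl -scalerAl (t2_bilinear T2).2.
by rewrite mulrDr -scalerAr (t2_bilinear T2).2.
Qed.

Lemma mult_id_trilinear : trilinear3 (fun a b c : A => (a * b) (x) c).
Proof.
split; [|split] => [b c|a c|a b] d x y /=; last exact: (t2_bilinear T2).2.
  by rewrite mulrDl -scalerAl (t2_bilinear T2).1.
by rewrite mulrDr -scalerAr (t2_bilinear T2).1.
Qed.

Lemma id_mult_t a b c : id_mult T2 (t3 T3 a b c) = a (x) (b * c).
Proof. exact: (t3_lift_t T3 id_mult_trilinear). Qed.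

Lemma mult_id_t a b c : mult_id T2 (t3 T3 a b c) = (a * b) (x) c.
Proof. exact: (t3_lift_t T3 mult_id_trilinear). Qed.

Lemma id_mult_t3_r x b : id_mult T2 (t3_r T3 x b) = tensor_rmul x b.
Proof.
move: x; apply: t2_unique => [||u v].
- exact: klinear_comp (t3_lift_linear id_mult_trilinear) (t3_r_bilinear.1 b).
- exact: tensor_rmul_linear.
by rewrite t3_r_t id_mult_t tensor_rmul_t.
Qed.

Lemma mult_id_t3_l a x : mult_id T2 (t3_l T3 a x) = tensor_lmul a x.
Proof.
move: x; apply: t2_unique => [||u v].
- exact: klinear_comp (t3_lift_linear mult_id_trilinear) (t3_l_bilinear.2 a).
- exact: tensor_lmul_linear.
by rewrite t3_l_t mult_id_t tensor_lmul_t.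
Qed.

Variables (D : A -> T2) (D_linear : klinear D).

Lemma comul_id_bilinear : bilinear2 (fun a b => t3_r T3 (D a) b).
Proof.
split=> [b|a]; last exact: t3_r_bilinear.2.
exact: klinear_comp (t3_r_bilinear.1 b) D_linear.
Qed.

Lemma id_comul_bilinear : bilinear2 (fun a b => t3_l T3 a (D b)).
Proof.
split=> [b|a]; first exact: t3_l_bilinear.1.
exact: klinear_comp (t3_l_bilinear.2 a) D_linear.
Qed.

Lemma comul_id_t u v : comul_id T3 D (u (x) v) = t3_r T3 (D u) v.
Proof. exact: (t2_lift_t T2 comul_id_bilinear). Qed.

Lemma id_comul_t u v : id_comul T3 D (u (x) v) = t3_l T3 u (D v).
Proof. exact: (t2_lift_t T2 id_comul_bilinear). Qed.

Lemma comul_id_multE :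
  (forall x, D (mult x) = id_mult T2 (comul_id T3 D x)) <->
  (forall a b, D (a * b) = tensor_rmul (D a) b).
Proof.
split=> [DF a b | DR]; first by rewrite -(mult_t T2) DF comul_id_t id_mult_t3_r.
apply: t2_unique => [||u v].
- by apply: klinear_comp; [exact: D_linear | exact: mult_linear].
- exact: klinear_comp (t3_lift_linear id_mult_trilinear)
                      (t2_lift_linear comul_id_bilinear).
by rewrite (mult_t T2) comul_id_t id_mult_t3_r.
Qed.

Lemma id_comul_multE :
  (forall x, D (mult x) = mult_id T2 (id_comul T3 D x)) <->
  (forall a b, D (a * b) = tensor_lmul a (D b)).
Proof.
split=> [DF a b | DL]; first by rewrite -(mult_t T2) DF id_comul_t mult_id_t3_l.
apply: t2_unique => [||u v].
- by apply: klinear_comp; [exact: D_linear | exact: mult_linear].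
- exact: klinear_comp (t3_lift_linear mult_id_trilinear)
                      (t2_lift_linear id_comul_bilinear).
by rewrite (mult_t T2) id_comul_t mult_id_t3_l.
Qed.

End Comultiplication.

Lemma nearly_frobeniusE (k : fieldType) (A : algType k)
    (T2 : tensor2 A A) (T3 : tensor3 A A A) (D : A -> T2) :
  nearly_frobenius T3 D <->
  bimod_morph (M := regular_bimodule A) (N := tensor_bimodule T2) D.
Proof.
split=> [[D_lin [DR DL]] | [D_lin [DL DR]]].
  split=> //; split; first exact/(id_comul_multE T3 D_lin).
  exact/(comul_id_multE T3 D_lin).
split=> //; split; first exact/(comul_id_multE T3 D_lin).
exact/(id_comul_multE T3 D_lin).
Qed.

Theorem theorem34 (k : fieldType) (A : algType k)
  (T2 : tensor2 A A) (T3 : tensor3 A A A) :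
  bimod_projective (regular_bimodule A) <->
  exists D : A -> T2, nearly_frobenius T3 D /\ normalized D.
Proof.
split=> [projA | [D [DF Dn]]].
  have [D [DM Dn]] := projA _ _ _ id (mult_bimod_morph T2) (@mult_surj _ _ T2)
                            (bimod_morph_id _).
  by exists D; split=> //; apply/nearly_frobeniusE.
have DM := proj1 (nearly_frobeniusE T3 D) DF.
apply: (bimod_projective_retract DM (mult_bimod_morph T2)); first exact: Dn.
exact: tensor_bimodule_projective.
Qed.
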